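(* Let $(X\cup Y,\mathbf{d})$ be a finite metric space, $\epsilon \in (0,\frac{1}{2})$ and $S \subseteq Y$. For each $x\in X$ let $N_x$ be an $\epsilon \cdot \mathbf{d}(x, S)$-net of $B_Y(\pi_S(x), \mathbf{d}(x,S)/\epsilon)$, and for $x\in X$, $y\in Y$ define $\widehat{\mathbf{d}}_S(x,y) = \min_{u\in N_x} \mathbf{d}(x,u) + \mathbf{d}(u,y)$. Then for all $x\in X$ and $y\in Y$, \[ \mathbf{d}(x,y) \le \widehat{\mathbf{d}}_S(x,y) \le (1+4\epsilon) \cdot \mathbf{d}(x,y) + 2 \epsilon \cdot \mathbf{d}(x,S). \]
   Context: For $S\subseteq X\cup Y$, $x$ and $r>0$, $B_S(x,r)=\{y\in S:\mathbf{d}(x,y)\le r\}$. $\pi_S(x)$ denotes a point of $S$ closest to $x$ and $\mathbf{d}(x,S)=\mathbf{d}(x,\pi_S(x))$. For $\rho>0$, a $\rho$-net of a set $B$ is a subset $N\subseteq B$ whose distinct points are pairwise at distance at least $\rho$ and such that every point of $B$ is within distance $\rho$ of some point of $N$. The net $N_x$ need not contain $\pi_S(x)$. *)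

From mathcomp Require Import all_boot all_order all_algebra.
Set Implicit Arguments. Unset Strict Implicit. Unset Printing Implicit Defensive.
Import Order.TTheory GRing.Theory Num.Theory.
Local Open Scope ring_scope.

Definition is_metric (R : realFieldType) (T : finType) (d : T -> T -> R) : Prop :=
  [/\ forall x y, 0 <= d x y,
      forall x y, d x y = 0 <-> x = y,
      forall x y, d x y = d y x &
      forall x y z, d x z <= d x y + d y z].

Definition ball_in (R : realFieldType) (T : finType) (d : T -> T -> R)
  (S : {set T}) (x : T) (r : R) : {set T} :=
  [set y in S | d x y <= r].

Definition is_closest_map (R : realFieldType) (T : finType) (d : T -> T -> R)
  (S : {set T}) (pi : T -> T) : Prop :=
  forall x, pi x \in S /\ (forall s, s \in S -> d x (pi x) <= d x s).

Definition is_net (R : realFieldType) (T : finType) (d : T -> T -> R)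
  (rho : R) (B N : {set T}) : Prop :=
  [/\ N \subset B,
      forall u v, u \in N -> v \in N -> u != v -> rho <= d u v &
      forall b, b \in B -> exists2 u, u \in N & d b u <= rho].

(* minimum of f over a finite set A (0 if A is empty; only used for nonempty A) *)
Definition set_min (R : realFieldType) (T : finType) (A : {set T}) (f : T -> R) : R :=
  match enum A with
  | [::] => 0
  | u0 :: _ => \big[Num.min/f u0]_(u in A) f u
  end.

From mathcomp Require Import all_boot all_order all_algebra.
From mathcomp Require Import lra.
Import Order.TTheory GRing.Theory Num.Theory.
Set Implicit Arguments. Unset Strict Implicit.
Local Open Scope ring_scope.

(* Write D = d(x, S) and s = pi_S(x); the lower bound is the triangle
   inequality.  If y lies in the ball B_Y(s, D/eps), some net point u is
   eps*D-close to y and the detour through u costs at most 2 eps D.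
   Otherwise d(s, y) > D/eps, and since d(s, y) <= D + d(x, y) this forces
   D <= 2 eps d(x, y) (using eps < 1/2); the detour through a net point
   eps*D-close to s then costs at most 2 D + 2 eps D <= 4 eps d(x, y) + 2 eps D. *)

Section SetMin.
Variables (R : realFieldType) (T : finType).
Implicit Types (A : {set T}) (f : T -> R).

Lemma set_min_inf A f u m : u \in A -> f u <= m -> set_min A f <= m.
Proof.
move=> uA fum; apply: le_trans fum; rewrite /set_min.
case E: (enum A) => [|u0 s]; last exact: bigmin_le_cond.
by have := mem_enum A u; rewrite E uA.
Qed.

Lemma le_set_min A f c :
  A != set0 -> (forall u, u \in A -> c <= f u) -> c <= set_min A f.
Proof.
case/set0Pn=> w wA cf; rewrite /set_min; case E: (enum A) => [|u0 s].
  by have := mem_enum A w; rewrite E wA.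
by apply: le_bigmin => //; apply: cf; rewrite -mem_enum E mem_head.
Qed.

End SetMin.

Section Metric.
Variables (R : realFieldType) (T : finType) (d : T -> T -> R).
Hypothesis d_metric : is_metric d.

Lemma metric_ge0 x y : 0 <= d x y.
Proof. by case: d_metric. Qed.

Lemma metric_sym x y : d x y = d y x.
Proof. by case: d_metric. Qed.

Lemma metric_triangle x y z : d x z <= d x y + d y z.
Proof. by case: d_metric. Qed.

Lemma metric_xx x : d x x = 0.
Proof. by case: d_metric => _ d0 _ _; apply/d0. Qed.

Lemma ball_in_center (Y : {set T}) x r : x \in Y -> 0 <= r -> x \in ball_in d Y x r.
Proof. by move=> xY r0; rewrite inE xY metric_xx r0. Qed.

Lemma detour_le x u y : d x u + d u y <= d x y + 2 * d u y.
Proof. by have := metric_triangle x y u; rewrite (metric_sym y u); lra. Qed.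

Lemma detour_via_le x s u y : d x u + d u y <= d x s + d s y + 2 * d s u.
Proof.
have := metric_triangle x s u; have := metric_triangle u s y.
by rewrite (metric_sym u s); lra.
Qed.

Lemma far_center_le eps x s y :
  0 < eps -> eps < 1 / 2 -> d x s / eps < d s y -> d x s <= 2 * eps * d x y.
Proof.
move=> e0 e12; rewrite ltr_pdivrMr // => far.
have sxy : eps * d s y <= eps * (d x s + d x y).
  by rewrite ler_pM2l // (metric_sym x s) metric_triangle.
have := metric_ge0 x s; nra.
Qed.

End Metric.

Theorem lemma3p2 (R : realFieldType) (T : finType) (d : T -> T -> R)
  (X Y S : {set T}) (eps : R) (pi : T -> T) (N : T -> {set T}) :
  is_metric d ->
  X :|: Y = [set: T] ->
  0 < eps -> eps < 1 / 2 ->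
  S \subset Y -> S != set0 ->
  is_closest_map d S pi ->
  (forall x, x \in X ->
     is_net d (eps * d x (pi x)) (ball_in d Y (pi x) (d x (pi x) / eps)) (N x)) ->
  forall x y, x \in X -> y \in Y ->
    let dhat := set_min (N x) (fun u => d x u + d u y) in
    d x y <= dhat /\
    dhat <= (1 + 4 * eps) * d x y + 2 * eps * d x (pi x).
Proof.
move=> dm _ e0 e12 SY _ cl hN x y xX yY dhat.
have [_ _ cover] := hN x xX.
have sB : pi x \in ball_in d Y (pi x) (d x (pi x) / eps).
  apply: (ball_in_center dm); first exact: (subsetP SY _ (proj1 (cl x))).
  by rewrite divr_ge0 ?(metric_ge0 dm) ?ltW.
have [u0 u0N su0] := cover _ sB.
have exy := mulr_ge0 (ltW e0) (metric_ge0 dm x y).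
split.
  apply: le_set_min => [|u _]; last exact: metric_triangle.
  by apply/set0Pn; exists u0.
have [yB | yB] := boolP (y \in ball_in d Y (pi x) (d x (pi x) / eps)).
  have [u uN yu] := cover y yB.
  apply: (set_min_inf uN); apply: le_trans (detour_le dm x u y) _.
  by rewrite (metric_sym dm u y); lra.
move: yB; rewrite inE yY /= -ltNge => far.
have dist_S_small := far_center_le dm e0 e12 far.
have := metric_triangle dm (pi x) x y; rewrite (metric_sym dm (pi x) x) => sy.
apply: (set_min_inf u0N); apply: le_trans (detour_via_le dm x (pi x) u0 y) _.
lra.
Qed.
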